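(* Assume job sizes are exponentially distributed with mean 1. Fix a server $s\in\mathcal{S}$, multipliers $\nu_j\in\mathbb{R}$ ($j\in\mathcal{J}_s$) and $\eta_{j,s}\in\mathbb{R}$. Let $g^*$ be the maximal long-run average reward of the single-server problem (SP$_s$) below. Then there exists a policy $\phi^*$ maximizing (SP$_s$) such that for every $j\in\mathcal{J}_s$ and every $n\in\mathcal{C}_{k(s)}$, $$\alpha^{\phi^*}_{j,s}(n)=\begin{cases}1,&\text{if }\frac{\nu_j}{\lambda_j}<V^{g^*}_s(n+1)-V^{g^*}_s(n),\\ 1\text{ or }0,&\text{if }\frac{\nu_j}{\lambda_j}=V^{g^*}_s(n+1)-V^{g^*}_s(n),\\ 0,&\text{otherwise.}\end{cases}$$
   Context: Setting: job types $j\in\mathcal{J}$ with Poisson arrival rates $\lambda_j>0$; server $s$ belongs to group $k=k(s)$, serves by processor sharing at total rate $\mu_k>0$ when nonempty, holds at most $B_k\ge1$ jobs, and consumes power $\varepsilon_k$ when nonempty and $\varepsilon^0_k$ when empty ($\varepsilon_k>\varepsilon^0_k\ge0$); $\mathcal{J}_s$ is the set of job types server $s$ may serve. $\mathcal{B}_k=\{0,\dots,B_k\}$, $\mathcal{C}_k=\{0,\dots,B_k-1\}$. $e^*\in\mathbb{R}$ is a fixed constant (the optimal energy efficiency of the farm), $f^r_k(n)=f^\mu_k(n)-e^*f^\varepsilon_k(n)$ with $f^\mu_k(0)=0$, $f^\varepsilon_k(0)=\varepsilon^0_k$, $f^\mu_k(n)=\mu_k$, $f^\varepsilon_k(n)=\varepsilon_k$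 for $n>0$. Single-server problem (SP$_s$): a stationary policy chooses $\alpha_{j,s}(n)\in[0,1]$ for $j\in\mathcal{J}_s$, $n\in\mathcal{B}_k$; the server state is then a birth–death chain on $\mathcal{B}_k$ with upward rate $\sum_{j\in\mathcal{J}_s}\lambda_j\alpha_{j,s}(n)$ and downward rate $\mu_k$ in states $n\ge1$. With steady-state distribution $\pi_s$, (SP$_s$) maximizes $\sum_{n\in\mathcal{B}_k}\pi_s(n)\bigl(f^r_k(n)-\sum_{j\in\mathcal{J}_s}\nu_j\alpha_{j,s}(n)-\mathbf{1}\{n=B_k\}\sum_{j\in\mathcal{J}_s}\eta_{j,s}\alpha_{j,s}(B_k)\bigr)$. For $g\in\mathbb{R}$, define the reward rate in state $n$ under actions $\alpha$ as $\tilde f^g(n)=f^r_k(n)-g-\sum_{j\in\mathcal{J}_s}\nu_j\alpha_{j,s}(n)$ for $n\in\mathcal{C}_k$ and $f^r_k(n)-g-\sum_{j\in\mathcal{J}_s}(\nu_j+\eta_{j,s})\alpha_{j,s}(n)$ for $n=B_k$; $V^g_s(n)$ is the maximum, over stationary policies with $\sum_{j\in\mathcal{J}_s}\alpha_{j,s}(0)>0$, of the expected cumulative $\tilde f^g$-reward accumulated starting from state $n$ until the chain first enters state $0$, with $V^g_s(0)=0$. *)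

From Stdlib Require Import Reals Lra Lia Arith.
Open Scope R_scope.

(* Job types of server s: J_s is represented by the indices j < m.
   Server states: n in B_k = {0,...,B}; C_k = {0,...,B-1}. *)

Fixpoint sumN (k : nat) (f : nat -> R) : R :=
  match k with
  | O => 0
  | S k' => sumN k' f + f k'
  end.

(* f^r_k(n) = f^mu_k(n) - e* f^eps_k(n) *)
Definition fr (mu eps eps0 estar : R) (n : nat) : R :=
  match n with
  | O => 0 - estar * eps0
  | S _ => mu - estar * eps
  end.

Definition admissible (m B : nat) (alpha : nat -> nat -> R) : Prop :=
  forall j n, (j < m)%nat -> (n <= B)%nat -> 0 <= alpha j n <= 1.

Definition uprate (m : nat) (lam : nat -> R) (alpha : nat -> nat -> R) (n : nat) : R :=
  sumN m (fun j => lam j * alpha j n).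

Definition outrate (m B : nat) (lam : nat -> R) (mu : R) (alpha : nat -> nat -> R)
    (n : nat) : R :=
  (if Nat.ltb n B then uprate m lam alpha n else 0) +
  (if Nat.leb 1 n then mu else 0).

Definition gen (m B : nat) (lam : nat -> R) (mu : R) (alpha : nat -> nat -> R)
    (n n' : nat) : R :=
  if andb (Nat.eqb n' (S n)) (Nat.ltb n B) then uprate m lam alpha n
  else if Nat.eqb (S n') n then mu
  else if Nat.eqb n' n then - outrate m B lam mu alpha n
  else 0.

Definition stationary (m B : nat) (lam : nat -> R) (mu : R)
    (alpha : nat -> nat -> R) (pi : nat -> R) : Prop :=
  (forall n, (n <= B)%nat -> 0 <= pi n) /\
  sumN (S B) pi = 1 /\
  (forall n', (n' <= B)%nat ->
     sumN (S B) (fun n => pi n * gen m B lam mu alpha n n') = 0).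

Definition sp_reward (m B : nat) (mu eps eps0 estar : R) (nu eta : nat -> R)
    (alpha : nat -> nat -> R) (n : nat) : R :=
  fr mu eps eps0 estar n
  - sumN m (fun j => nu j * alpha j n)
  - (if Nat.eqb n B then sumN m (fun j => eta j * alpha j B) else 0).

Definition sp_objective (m B : nat) (mu eps eps0 estar : R) (nu eta : nat -> R)
    (alpha : nat -> nat -> R) (pi : nat -> R) : R :=
  sumN (S B) (fun n => pi n * sp_reward m B mu eps eps0 estar nu eta alpha n).

Definition is_opt_value (m B : nat) (lam : nat -> R) (mu eps eps0 estar : R)
    (nu eta : nat -> R) (g : R) : Prop :=
  (exists alpha pi, admissible m B alpha /\ stationary m B lam mu alpha pi /\
      sp_objective m B mu eps eps0 estar nu eta alpha pi = g) /\
  (forall alpha pi, admissible m B alpha -> stationary m B lam mu alpha pi ->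
      sp_objective m B mu eps eps0 estar nu eta alpha pi <= g).

Definition ftilde (m B : nat) (mu eps eps0 estar : R) (nu eta : nat -> R)
    (g : R) (alpha : nat -> nat -> R) (n : nat) : R :=
  sp_reward m B mu eps eps0 estar nu eta alpha n - g.

(* W(n) = expected cumulative tilde f^g-reward from n until first entering 0,
   characterised by first-step (Dynkin) equations of the absorbing chain:
   W(0) = 0 and tilde f^g(n) + sum_n' Q(n,n') W(n') = 0 for 1 <= n <= B. *)
Definition cum_reward (m B : nat) (lam : nat -> R) (mu eps eps0 estar : R)
    (nu eta : nat -> R) (g : R) (alpha : nat -> nat -> R) (W : nat -> R) : Prop :=
  W O = 0 /\
  forall n, (1 <= n <= B)%nat ->
    ftilde m B mu eps eps0 estar nu eta g alpha n
    + sumN (S B) (fun n' => gen m B lam mu alpha n n' * W n') = 0.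

Definition V_admissible (m B : nat) (alpha : nat -> nat -> R) : Prop :=
  admissible m B alpha /\ sumN m (fun j => alpha j O) > 0.

Definition is_value_fn (m B : nat) (lam : nat -> R) (mu eps eps0 estar : R)
    (nu eta : nat -> R) (g : R) (V : nat -> R) : Prop :=
  V O = 0 /\
  forall n, (1 <= n <= B)%nat ->
    (forall alpha W, V_admissible m B alpha ->
        cum_reward m B lam mu eps eps0 estar nu eta g alpha W -> W n <= V n) /\
    (exists alpha W, V_admissible m B alpha /\
        cum_reward m B lam mu eps eps0 estar nu eta g alpha W /\ W n = V n).

From Stdlib Require Import Reals Lra Lia.
Open Scope R_scope.

(* Solve the Bellman equations of the chain absorbed at 0 backwards from the
   full state B: if q(n, a, x) is the reward rate, net of g, of admitting the
   jobs a in state n when one more job is worth x, put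
   D(n) := max_a q(n, a, D(n+1)) / mu.  Every policy has cumulative-reward
   increments W(n) - W(n-1) <= D(n), with equality for the policy greedy with
   respect to D, so V(n) = D(1) + ... + D(n).  For a stationary policy, the
   long-run reward minus g equals pi(0) q(0, a, D(1)) plus the pi-average over
   n >= 1 of q(n, a, D(n+1)) - mu D(n); each term is maximised by the greedy
   policy, for which the latter vanish.  Hence an optimal policy gives
   c := q(0, greedy, D(1)) >= 0, while the optimality of g gives pi(0) c <= 0
   for the greedy policy: c = 0 and the greedy policy is optimal.  It admits
   type j in state n < B exactly when nu_j / lam_j < D(n+1). *)

Lemma sumN_add k f g : sumN k (fun i => f i + g i) = sumN k f + sumN k g.
Proof. induction k; simpl; [ring | rewrite IHk; ring]. Qed.

Lemma sumN_sub k f g : sumN k (fun i => f i - g i) = sumN k f - sumN k g.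
Proof. induction k; simpl; [ring | rewrite IHk; ring]. Qed.

Lemma sumN_scal k c f : sumN k (fun i => c * f i) = c * sumN k f.
Proof. induction k; simpl; [ring | rewrite IHk; ring]. Qed.

Lemma sumN_const k c : sumN k (fun _ => c) = INR k * c.
Proof. induction k; simpl sumN; [simpl; ring | rewrite IHk, S_INR; ring]. Qed.

Lemma sumN_ext k f g :
  (forall i, (i < k)%nat -> f i = g i) -> sumN k f = sumN k g.
Proof.
  induction k; intros Hfg; simpl; [reflexivity |].
  rewrite IHk, Hfg; [reflexivity | lia | intros; apply Hfg; lia].
Qed.

Lemma sumN_eq0 k f : (forall i, (i < k)%nat -> f i = 0) -> sumN k f = 0.
Proof. intros Hf. rewrite (sumN_ext k f (fun _ => 0)), sumN_const by exact Hf. ring. Qed.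

Lemma sumN_le k f g :
  (forall i, (i < k)%nat -> f i <= g i) -> sumN k f <= sumN k g.
Proof.
  induction k; intros Hfg; simpl; [lra |].
  apply Rplus_le_compat; [apply IHk; intros; apply Hfg | apply Hfg]; lia.
Qed.

Lemma sumN_ge0 k f : (forall i, (i < k)%nat -> 0 <= f i) -> 0 <= sumN k f.
Proof.
  intros Hf. rewrite <- (sumN_eq0 k (fun _ => 0)) by reflexivity.
  exact (sumN_le k _ _ Hf).
Qed.

Lemma sumN_le0 k f : (forall i, (i < k)%nat -> f i <= 0) -> sumN k f <= 0.
Proof.
  intros Hf. rewrite <- (sumN_eq0 k (fun _ => 0)) by reflexivity.
  exact (sumN_le k _ _ Hf).
Qed.

Lemma sumN_recl k f : sumN (S k) f = f O + sumN k (fun i => f (S i)).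
Proof. induction k; simpl in *; [ring | rewrite IHk; ring]. Qed.

Lemma sumN_exchange a b (f : nat -> nat -> R) :
  sumN a (fun i => sumN b (fun j => f i j)) = sumN b (fun j => sumN a (fun i => f i j)).
Proof.
  induction a; simpl.
  - symmetry; apply sumN_eq0; reflexivity.
  - rewrite IHa, <- sumN_add; reflexivity.
Qed.

Lemma sumN_pick k p f :
  sumN k (fun i => if Nat.eqb i p then f i else 0) = if Nat.ltb p k then f p else 0.
Proof.
  induction k; simpl; [destruct p; reflexivity |].
  rewrite IHk.
  destruct (Nat.eqb_spec k p), (Nat.ltb_spec p k), (Nat.ltb_spec p (S k));
    subst; try lia; ring.
Qed.

Fixpoint backward_iter (F : nat -> R -> R) (B k : nat) : R :=
  match k with
  | O => F B 0
  | S k' => F (B - S k')%nat (backward_iter F B k')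
  end.

(* The solution of x(n) = F n (x(n+1)) for n <= B; it is well defined without
   a terminal value x(B+1) when F B is constant. *)
Definition backward_solution (F : nat -> R -> R) (B n : nat) : R :=
  backward_iter F B (B - n).

Lemma backward_solution_eq F B n :
  (forall x y, F B x = F B y) -> (n <= B)%nat ->
  backward_solution F B n = F n (backward_solution F B (S n)).
Proof.
  intros HFB Hn. unfold backward_solution.
  destruct (Nat.eq_dec n B) as [-> | Hne].
  - rewrite Nat.sub_diag. apply HFB.
  - replace (B - n)%nat with (S (B - S n)) by lia. simpl.
    replace (B - S (B - S n))%nat with n by lia. reflexivity.
Qed.

Section BirthDeathChain.

Variables (m B : nat) (lam : nat -> R) (mu : R).

Lemma gen_apply al (h : nat -> R) n : (n <= B)%nat ->
  sumN (S B) (fun n' => gen m B lam mu al n n' * h n') =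
  (if Nat.ltb n B then uprate m lam al n * (h (S n) - h n) else 0) +
  (if Nat.leb 1 n then mu * (h (pred n) - h n) else 0).
Proof.
  intros Hn.
  rewrite (sumN_ext _ _ (fun n' =>
     (if Nat.eqb n' (S n) then (if Nat.ltb n B then uprate m lam al n else 0) * h n' else 0) +
     (if Nat.eqb n' (pred n) then (if Nat.leb 1 n then mu else 0) * h n' else 0) +
     (if Nat.eqb n' n then - outrate m B lam mu al n * h n' else 0))).
  2:{ intros i _. unfold gen.
      destruct (Nat.eqb_spec i (S n)), (Nat.ltb_spec n B), (Nat.eqb_spec (S i) n),
        (Nat.eqb_spec i n), (Nat.eqb_spec i (pred n)), (Nat.leb_spec 1 n);
        simpl; subst; try lia; ring. }
  rewrite !sumN_add, !sumN_pick. unfold outrate.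
  destruct (Nat.ltb_spec n B), (Nat.ltb_spec (S n) (S B)), (Nat.ltb_spec (pred n) (S B)),
    (Nat.ltb_spec n (S B)), (Nat.leb_spec 1 n); try lia; ring.
Qed.

Lemma gen_balance al (pi : nat -> R) n' : (n' <= B)%nat ->
  sumN (S B) (fun n => pi n * gen m B lam mu al n n') =
  (if Nat.leb 1 n' then pi (pred n') * uprate m lam al (pred n') else 0) +
  (if Nat.ltb n' B then pi (S n') * mu else 0) - pi n' * outrate m B lam mu al n'.
Proof.
  intros Hn.
  rewrite (sumN_ext _ _ (fun n =>
     (if Nat.eqb n (pred n') then
        (if Nat.leb 1 n' then pi n * uprate m lam al n else 0) else 0) +
     (if Nat.eqb n (S n') then pi n * mu else 0) +
     (if Nat.eqb n n' then - pi n * outrate m B lam mu al n else 0))).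
  2:{ intros i _. unfold gen.
      destruct (Nat.eqb_spec n' (S i)), (Nat.ltb_spec i B), (Nat.eqb_spec (S n') i),
        (Nat.eqb_spec n' i), (Nat.eqb_spec i (pred n')), (Nat.leb_spec 1 n'),
        (Nat.eqb_spec i (S n')), (Nat.eqb_spec i n');
        simpl; subst; try lia; ring. }
  rewrite !sumN_add, !sumN_pick.
  destruct (Nat.ltb_spec n' B), (Nat.ltb_spec (S n') (S B)), (Nat.ltb_spec (pred n') (S B)),
    (Nat.ltb_spec n' (S B)), (Nat.leb_spec 1 n'); try lia; ring.
Qed.

Hypothesis mu_pos : 0 < mu.

(* If pi(0) = 0, the balance equation in state n propagates pi(n+1) = 0. *)
Lemma stationary_empty_pos al pi : (1 <= B)%nat ->
  stationary m B lam mu al pi -> 0 < pi O.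
Proof.
  intros HB [Hnn [Hsum Hbal]].
  destruct (Rlt_or_le 0 (pi O)) as [Hp | Hp]; [exact Hp | exfalso].
  assert (Hzero : forall k, (k <= B)%nat -> forall i, (i <= k)%nat -> pi i = 0).
  { induction k as [| k IHk]; intros Hk i Hi.
    - replace i with O by lia. pose proof (Hnn O ltac:(lia)). lra.
    - destruct (Nat.eq_dec i (S k)) as [-> | Hne]; [| apply IHk; lia].
      pose proof (Hbal k ltac:(lia)) as Hb. rewrite gen_balance in Hb by lia.
      rewrite (IHk ltac:(lia) k ltac:(lia)) in Hb.
      destruct (Nat.ltb_spec k B); [| lia].
      destruct (Nat.leb_spec 1 k);
        [rewrite (IHk ltac:(lia) (pred k) ltac:(lia)) in Hb |];
        apply (Rmult_eq_reg_r mu); lra. }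
  rewrite sumN_eq0 in Hsum; [lra |].
  intros i Hi. apply (Hzero B); lia.
Qed.

Fixpoint product_form (u : nat -> R) (n : nat) : R :=
  match n with
  | O => 1
  | S k => product_form u k * u k / mu
  end.

Lemma product_form_ge0 u n : (forall k, 0 <= u k) -> 0 <= product_form u n.
Proof.
  intros Hu. induction n; simpl; [lra |].
  apply Rmult_le_pos; [apply Rmult_le_pos; auto |].
  left; apply Rinv_0_lt_compat, mu_pos.
Qed.

Lemma stationary_exists al :
  (forall n, 0 <= uprate m lam al n) -> exists pi, stationary m B lam mu al pi.
Proof.
  intros Hu.
  set (u := uprate m lam al).
  set (Z := sumN (S B) (product_form u)).
  assert (HZ : 1 <= Z).
  { unfold Z. rewrite sumN_recl.
    pose proof (sumN_ge0 B (fun i => product_form u (S i))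
                  ltac:(intros; apply product_form_ge0; auto)).
    simpl product_form at 1. lra. }
  exists (fun n => product_form u n / Z). split; [| split].
  - intros n _. apply Rmult_le_pos; [apply product_form_ge0; auto |].
    left; apply Rinv_0_lt_compat; lra.
  - rewrite (sumN_ext _ _ (fun i => / Z * product_form u i)) by (intros; unfold Rdiv; ring).
    rewrite sumN_scal. fold Z. field. lra.
  - intros n' Hn'. rewrite gen_balance by lia. unfold outrate. fold u.
    destruct n' as [| k]; simpl pred.
    + destruct (Nat.ltb_spec 0 B); simpl; [field; split; lra | ring].
    + destruct (Nat.ltb_spec (S k) B); simpl; field; split; lra.
Qed.

(* Since pi Q = 0, adding Q h to the reward does not change its pi-average. *)
Lemma stationary_average_shift al pi (r h : nat -> R) c :
  stationary m B lam mu al pi ->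
  sumN (S B) (fun n => pi n * r n) - c =
  sumN (S B) (fun n => pi n * (r n - c + sumN (S B) (fun n' => gen m B lam mu al n n' * h n'))).
Proof.
  intros [_ [Hsum Hbal]].
  rewrite (sumN_ext (S B) (fun n => pi n * (r n - c + sumN (S B)
                                    (fun n' => gen m B lam mu al n n' * h n')))
             (fun n => pi n * r n + (- c) * pi n + sumN (S B) (fun n' => h n' * (pi n * gen m B lam mu al n n')))).
  2:{ intros i _.
      rewrite (sumN_ext (S B) (fun n' => h n' * (pi i * gen m B lam mu al i n'))
                 (fun n' => pi i * (gen m B lam mu al i n' * h n'))) by (intros; ring).
      rewrite sumN_scal. ring. }
  rewrite !sumN_add, sumN_scal, Hsum, sumN_exchange.
  rewrite (sumN_eq0 (S B) (fun j => sumN (S B) (fun i => h j * (pi i * gen m B lam mu al i j)))).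
  - ring.
  - intros j Hj. rewrite sumN_scal, (Hbal j ltac:(lia)). ring.
Qed.

End BirthDeathChain.

Section SingleServer.

Variables (m B : nat) (lam : nat -> R) (mu eps eps0 estar : R) (nu eta : nat -> R) (g : R).
Hypothesis lam_pos : forall j, (j < m)%nat -> 0 < lam j.
Hypothesis mu_pos : 0 < mu.

(* Marginal reward rate of admitting type j in state n when one more job in
   the system is worth x; in the full state B admission is only charged. *)
Definition admission_gain (n : nat) (x : R) (j : nat) : R :=
  (if Nat.ltb n B then lam j * x else 0) - nu j - (if Nat.eqb n B then eta j else 0).

Definition qvalue (n : nat) (a : nat -> R) (x : R) : R :=
  fr mu eps eps0 estar n - g + sumN m (fun j => a j * admission_gain n x j).

Definition greedy (n : nat) (x : R) (j : nat) : R :=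
  if Rlt_dec 0 (admission_gain n x j) then 1 else 0.

Lemma greedy_range n x j : 0 <= greedy n x j <= 1.
Proof. unfold greedy. destruct Rlt_dec; lra. Qed.

Lemma qvalue_ext n a b x :
  (forall j, (j < m)%nat -> a j = b j) -> qvalue n a x = qvalue n b x.
Proof.
  intros Hab. unfold qvalue. f_equal. apply sumN_ext. intros j Hj. rewrite Hab by exact Hj.
  reflexivity.
Qed.

Lemma qvalue_le_greedy n a x :
  (forall j, (j < m)%nat -> 0 <= a j <= 1) -> qvalue n a x <= qvalue n (greedy n x) x.
Proof.
  intros Ha. unfold qvalue. apply Rplus_le_compat_l, sumN_le. intros j Hj.
  specialize (Ha j Hj). unfold greedy.
  destruct Rlt_dec; nra.
Qed.

Lemma qvalue_monotone n a x y :
  (forall j, (j < m)%nat -> 0 <= a j) -> x <= y -> qvalue n a x <= qvalue n a y.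
Proof.
  intros Ha Hxy. unfold qvalue. apply Rplus_le_compat_l, sumN_le. intros j Hj.
  pose proof (Ha j Hj). pose proof (lam_pos j Hj).
  apply Rmult_le_compat_l; [assumption |]. unfold admission_gain.
  destruct (Nat.ltb n B); nra.
Qed.

Lemma admission_gain_full x y j : admission_gain B x j = admission_gain B y j.
Proof. unfold admission_gain. rewrite Nat.ltb_irrefl. reflexivity. Qed.

Lemma qvalue_full a x y : qvalue B a x = qvalue B a y.
Proof.
  unfold qvalue. f_equal. apply sumN_ext. intros j _.
  rewrite (admission_gain_full x y). reflexivity.
Qed.

Lemma qvalue_greedy_full x y : qvalue B (greedy B x) x = qvalue B (greedy B y) y.
Proof.
  unfold qvalue. f_equal. apply sumN_ext. intros j _.
  unfold greedy. rewrite (admission_gain_full x y). reflexivity.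
Qed.

Lemma greedy_below_full n x j : (n < B)%nat -> (j < m)%nat ->
  greedy n x j = if Rlt_dec (nu j / lam j) x then 1 else 0.
Proof.
  intros Hn Hj. pose proof (lam_pos j Hj).
  assert (Hnu : nu j = nu j / lam j * lam j) by (field; lra).
  unfold greedy, admission_gain.
  destruct (Nat.ltb_spec n B), (Nat.eqb_spec n B); try lia.
  destruct (Rlt_dec (nu j / lam j) x), Rlt_dec; try reflexivity; exfalso; nra.
Qed.

Lemma reward_add_drift al (h : nat -> R) n : (n <= B)%nat ->
  sp_reward m B mu eps eps0 estar nu eta al n - g +
    sumN (S B) (fun n' => gen m B lam mu al n n' * h n') =
  qvalue n (fun j => al j n) (h (S n) - h n) +
    (if Nat.leb 1 n then mu * (h (pred n) - h n) else 0).
Proof.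
  intros Hn. rewrite gen_apply by exact Hn.
  unfold sp_reward, qvalue, admission_gain, uprate.
  destruct (Nat.eqb_spec n B) as [-> | Hne].
  - rewrite Nat.ltb_irrefl.
    rewrite (sumN_ext m (fun j => al j B * (0 - nu j - eta j))
               (fun j => (-1) * (nu j * al j B) - eta j * al j B)) by (intros; ring).
    rewrite sumN_sub, sumN_scal. ring.
  - destruct (Nat.ltb_spec n B); [| lia].
    rewrite (sumN_ext m (fun j => al j n * (lam j * (h (S n) - h n) - nu j - 0))
               (fun j => (h (S n) - h n) * (lam j * al j n) - nu j * al j n))
      by (intros; ring).
    rewrite sumN_sub, sumN_scal. ring.
Qed.

Definition bellman_incr (n : nat) : R :=
  backward_solution (fun n x => qvalue n (greedy n x) x / mu) B n.

Lemma bellman_incr_eq n : (n <= B)%nat ->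
  qvalue n (greedy n (bellman_incr (S n))) (bellman_incr (S n)) = mu * bellman_incr n.
Proof.
  intros Hn. unfold bellman_incr at 3.
  rewrite backward_solution_eq
    by (try assumption; intros x y; rewrite (qvalue_greedy_full x y); reflexivity).
  fold (bellman_incr (S n)). field. lra.
Qed.

Definition greedy_policy (j n : nat) : R := greedy n (bellman_incr (S n)) j.

Definition bellman_value (n : nat) : R := sumN n (fun k => bellman_incr (S k)).

Lemma bellman_value_succ n : bellman_value (S n) = bellman_value n + bellman_incr (S n).
Proof. reflexivity. Qed.

Lemma greedy_policy_admissible : admissible m B greedy_policy.
Proof. intros j n _ _. apply greedy_range. Qed.

Lemma cum_reward_incr_le al W :
  admissible m B al -> cum_reward m B lam mu eps eps0 estar nu eta g al W ->
  forall n, (1 <= n <= B)%nat -> W n - W (pred n) <= bellman_incr n.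
Proof.
  intros Hal [_ HW].
  assert (Hback : forall k n, (1 <= n <= B)%nat -> (B - n)%nat = k ->
                    W n - W (pred n) <= bellman_incr n).
  { induction k as [| k IHk]; intros n Hn Hk.
    all: pose proof (HW n Hn) as Hcum; unfold ftilde in Hcum.
    all: rewrite reward_add_drift in Hcum by lia.
    all: destruct (Nat.leb_spec 1 n); [| lia].
    all: assert (Hq : qvalue n (fun j => al j n) (W (S n) - W n)
                      <= qvalue n (fun j => al j n) (bellman_incr (S n))).
    1:{ replace n with B by lia. rewrite (qvalue_full _ _ (bellman_incr (S B))). lra. }
    2:{ apply qvalue_monotone; [intros j Hj; apply (Hal j n Hj); lia |].
        apply (IHk (S n)); simpl; lia. }
    all: pose proof (qvalue_le_greedy n (fun j => al j n) (bellman_incr (S n))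
                      ltac:(intros j Hj; apply Hal; lia)) as Hg.
    all: rewrite bellman_incr_eq in Hg by lia.
    all: apply (Rmult_le_reg_l mu); lra. }
  intros n Hn. exact (Hback (B - n)%nat n Hn eq_refl).
Qed.

Lemma cum_reward_le_bellman_value al W :
  admissible m B al -> cum_reward m B lam mu eps eps0 estar nu eta g al W ->
  forall n, (n <= B)%nat -> W n <= bellman_value n.
Proof.
  intros Hal HW. induction n as [| n IHn]; intros Hn.
  - destruct HW as [-> _]. unfold bellman_value; simpl; lra.
  - pose proof (cum_reward_incr_le al W Hal HW (S n) ltac:(lia)).
    pose proof (IHn ltac:(lia)). unfold bellman_value in *; simpl in *. lra.
Qed.

Lemma bellman_value_cum_reward al :
  (forall j n, (1 <= n <= B)%nat -> al j n = greedy_policy j n) ->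
  cum_reward m B lam mu eps eps0 estar nu eta g al bellman_value.
Proof.
  intros Hal. split; [reflexivity |]. intros [| n] Hn; [lia |]. unfold ftilde.
  rewrite reward_add_drift by lia.
  rewrite (qvalue_ext _ _ (greedy (S n) (bellman_incr (S (S n))))) by (intros; apply Hal; lia).
  replace (bellman_value (S (S n)) - bellman_value (S n)) with (bellman_incr (S (S n)))
    by (rewrite (bellman_value_succ (S n)); ring).
  rewrite bellman_incr_eq, bellman_value_succ by lia. simpl. ring.
Qed.

Lemma V_admissible_types_pos al : V_admissible m B al -> (0 < m)%nat.
Proof. intros [_ Hpos]. destruct m; [simpl in Hpos; lra | lia]. Qed.

Lemma value_fn_eq_bellman_value V :
  is_value_fn m B lam mu eps eps0 estar nu eta g V ->
  forall n, (n <= B)%nat -> V n = bellman_value n.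
Proof.
  intros [HV0 HV] [| n] Hn; [exact HV0 |].
  destruct (HV (S n) ltac:(lia)) as [Hup [al [W [[Hal Hal0] [HW HWV]]]]].
  (* In state 0 the greedy policy may reject every type; admitting all of them
     there changes no cumulative reward but makes the policy V-admissible. *)
  set (phi0 := fun j k => if Nat.eqb k 0 then 1 else greedy_policy j k).
  assert (Hphi0 : V_admissible m B phi0).
  { split.
    - intros j k _ _. unfold phi0. destruct (Nat.eqb k 0); [lra | apply greedy_range].
    - unfold phi0; simpl. rewrite sumN_const, Rmult_1_r.
      apply lt_0_INR, (V_admissible_types_pos al); split; assumption. }
  assert (Hgreedy : cum_reward m B lam mu eps eps0 estar nu eta g phi0 bellman_value).
  { apply bellman_value_cum_reward.
    intros j k Hk. unfold phi0. destruct (Nat.eqb_spec k 0); [lia | reflexivity]. }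
  pose proof (Hup phi0 bellman_value Hphi0 Hgreedy).
  pose proof (cum_reward_le_bellman_value al W Hal HW (S n) Hn). lra.
Qed.

Definition empty_residual : R := qvalue 0 (fun j => greedy_policy j 0) (bellman_incr 1).

Lemma objective_gap al pi : stationary m B lam mu al pi ->
  sp_objective m B mu eps eps0 estar nu eta al pi - g =
  pi O * qvalue 0 (fun j => al j O) (bellman_incr 1) +
  sumN B (fun n => pi (S n) * (qvalue (S n) (fun j => al j (S n)) (bellman_incr (S (S n)))
                               - mu * bellman_incr (S n))).
Proof.
  intros Hpi. unfold sp_objective.
  rewrite (stationary_average_shift m B lam mu al pi _ bellman_value g Hpi), sumN_recl.
  rewrite reward_add_drift by lia.
  replace (bellman_value 1 - bellman_value 0) with (bellman_incr 1)
    by (unfold bellman_value; simpl; ring).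
  f_equal; [simpl; ring |].
  apply sumN_ext. intros n Hn. rewrite reward_add_drift by lia.
  replace (bellman_value (S (S n)) - bellman_value (S n)) with (bellman_incr (S (S n)))
    by (rewrite (bellman_value_succ (S n)); ring).
  simpl. rewrite bellman_value_succ. ring.
Qed.

Lemma objective_gap_greedy pi : stationary m B lam mu greedy_policy pi ->
  sp_objective m B mu eps eps0 estar nu eta greedy_policy pi - g = pi O * empty_residual.
Proof.
  intros Hpi. rewrite (objective_gap _ _ Hpi), sumN_eq0; [unfold empty_residual; ring |].
  intros n Hn. rewrite bellman_incr_eq by lia. ring.
Qed.

Lemma objective_gap_le al pi :
  admissible m B al -> stationary m B lam mu al pi ->
  sp_objective m B mu eps eps0 estar nu eta al pi - g <= pi O * empty_residual.
Proof.
  intros Hal Hpi. rewrite (objective_gap _ _ Hpi).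
  destruct Hpi as [Hnn _].
  assert (Hgreedy : forall n, (n <= B)%nat ->
            qvalue n (fun j => al j n) (bellman_incr (S n))
            <= qvalue n (fun j => greedy_policy j n) (bellman_incr (S n))).
  { intros n Hn. apply qvalue_le_greedy. intros j Hj. apply Hal; lia. }
  assert (Hrest : sumN B (fun n => pi (S n) * (qvalue (S n) (fun j => al j (S n))
                    (bellman_incr (S (S n))) - mu * bellman_incr (S n))) <= 0).
  { apply sumN_le0. intros n Hn.
    pose proof (Hgreedy (S n) ltac:(lia)) as Hq. rewrite bellman_incr_eq in Hq by lia.
    pose proof (Hnn (S n) ltac:(lia)). nra. }
  pose proof (Hgreedy O ltac:(lia)). pose proof (Hnn O ltac:(lia)).
  unfold empty_residual. nra.
Qed.

Lemma greedy_policy_optimal : (1 <= B)%nat ->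
  is_opt_value m B lam mu eps eps0 estar nu eta g ->
  exists pi, stationary m B lam mu greedy_policy pi /\
             sp_objective m B mu eps eps0 estar nu eta greedy_policy pi = g.
Proof.
  intros HB [[a0 [pi0 [Ha0 [Hpi0 Hobj0]]]] Hopt].
  destruct (stationary_exists m B lam mu mu_pos greedy_policy) as [pi Hpi].
  { intros n. apply sumN_ge0. intros j Hj.
    pose proof (lam_pos j Hj). pose proof (greedy_range n (bellman_incr (S n)) j).
    unfold greedy_policy. nra. }
  exists pi. split; [exact Hpi |].
  pose proof (objective_gap_le a0 pi0 Ha0 Hpi0) as Hge.
  pose proof (objective_gap_greedy pi Hpi) as Hgreedy.
  pose proof (Hopt greedy_policy pi greedy_policy_admissible Hpi).
  pose proof (stationary_empty_pos m B lam mu mu_pos a0 pi0 HB Hpi0).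
  pose proof (stationary_empty_pos m B lam mu mu_pos greedy_policy pi HB Hpi).
  assert (Hres : empty_residual = 0) by nra.
  rewrite Hres in Hgreedy. lra.
Qed.

End SingleServer.

Theorem lemma1 (m B : nat) (lam : nat -> R) (mu eps eps0 estar : R)
    (nu eta : nat -> R) (gstar : R) (V : nat -> R) :
  (1 <= B)%nat ->
  (forall j, (j < m)%nat -> 0 < lam j) ->
  0 < mu ->
  0 <= eps0 -> eps0 < eps ->
  is_opt_value m B lam mu eps eps0 estar nu eta gstar ->
  is_value_fn m B lam mu eps eps0 estar nu eta gstar V ->
  exists phi,
    admissible m B phi /\
    (exists pi, stationary m B lam mu phi pi /\
       sp_objective m B mu eps eps0 estar nu eta phi pi = gstar) /\
    (forall j n, (j < m)%nat -> (n < B)%nat ->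
       (nu j / lam j < V (S n) - V n -> phi j n = 1) /\
       (nu j / lam j = V (S n) - V n -> phi j n = 1 \/ phi j n = 0) /\
       (nu j / lam j > V (S n) - V n -> phi j n = 0)).
Proof.
  intros HB Hlam Hmu _ _ Hopt HV.
  exists (greedy_policy m B lam mu eps eps0 estar nu eta gstar).
  split; [apply greedy_policy_admissible |].
  split; [apply greedy_policy_optimal; assumption |].
  intros j n Hj Hn.
  assert (Hincr : V (S n) - V n = bellman_incr m B lam mu eps eps0 estar nu eta gstar (S n)).
  { rewrite !(value_fn_eq_bellman_value m B lam mu eps eps0 estar nu eta gstar Hlam Hmu V HV),
      bellman_value_succ by lia.
    ring. }
  unfold greedy_policy. rewrite Hincr, (greedy_below_full m B lam nu eta Hlam) by assumption.
  destruct Rlt_dec; repeat split; intros; try lra; auto.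
Qed.
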